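(* Let a pure two-mode Gaussian state have covariance matrix $$\boldsymbol\Sigma=\begin{bmatrix}a\,\mathbf S(r)&\mathbf R(\phi)\mathbf C\\ [\mathbf R(\phi)\mathbf C]^\top&b\,\mathbb{I}_2\end{bmatrix},$$ where $\mathbf S(r)=\mathrm{diag}(r,r^{-1})$ with $r>0$, $\mathbf R(\phi)=\begin{bmatrix}\cos\phi&-\sin\phi\\ \sin\phi&\cos\phi\end{bmatrix}$, $\mathbf C=\mathrm{diag}(c_+,c_-)$, and $a,b,c_\pm,\phi$ real. Then $a=b$.
   Context: Quadratures $\mathbf R=(q_S,p_S,q_I,p_I)^\top$ with $[R_i,R_j]=\mathrm{i}\Omega_{ij}$, $\boldsymbol\Omega=\mathbb{I}_2\otimes\begin{bmatrix}0&1\\-1&0\end{bmatrix}$; covariance $\Sigma_{ij}=\tfrac12\langle R_iR_j+R_jR_i\rangle-\langle R_i\rangle\langle R_j\rangle$, satisfying $\boldsymbol\Sigma+\mathrm{i}\boldsymbol\Omega/2\succeq0$. In this convention a two-mode Gaussian state is pure iff $\det\boldsymbol\Sigma=1/16$. *)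

From HB Require Import structures.
From mathcomp Require Import all_boot all_order all_algebra.
From mathcomp Require Import reals trigo.
From mathcomp Require Import complex.
Set Implicit Arguments. Unset Strict Implicit. Unset Printing Implicit Defensive.
Import Order.TTheory GRing.Theory Num.Theory.
Local Open Scope ring_scope.
Local Open Scope complex_scope.

Section Defs.
Variable R : realType.

Definition Jmx : 'M[R]_2 := \matrix_(i < 2, j < 2)
  (if (i == 0) && (j == 1) then 1 else if (i == 1) && (j == 0) then -1 else 0).

(* Omega = I_2 (x) J, mode ordering (q_S,p_S,q_I,p_I) *)
Definition Omega2 : 'M[R]_(2 + 2) := block_mx Jmx 0 0 Jmx.

Definition Smx (r : R) : 'M[R]_2 := \matrix_(i < 2, j < 2)
  (if i == j then (if i == 0 then r else r^-1) else 0).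

Definition Rmx (phi : R) : 'M[R]_2 := \matrix_(i < 2, j < 2)
  (if i == 0 then (if j == 0 then cos phi else - sin phi)
   else (if j == 0 then sin phi else cos phi)).

Definition Cmx (cp cm : R) : 'M[R]_2 := \matrix_(i < 2, j < 2)
  (if i == j then (if i == 0 then cp else cm) else 0).

Definition Sigma_of (a b r phi cp cm : R) : 'M[R]_(2 + 2) :=
  block_mx (a *: Smx r) (Rmx phi *m Cmx cp cm)
           ((Rmx phi *m Cmx cp cm)^T) (b%:M).

(* Hermitian positive semidefiniteness of a complex matrix:
   z^* M z >= 0 for every complex vector z (>= in the numeric order of R[i],
   which in particular forces the value to be real). *)
Definition psd_C n (M : 'M[R[i]]_n) : Prop :=
  forall z : 'cV[R[i]]_n, 0 <= ((map_mx conjc z)^T *m M *m z) 0 0.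

Definition toCmx n (M : 'M[R]_n) : 'M[R[i]]_n := map_mx (fun x => x%:C) M.

Definition bona_fide (S : 'M[R]_(2 + 2)) : Prop :=
  psd_C (toCmx S + (('i : R[i]) / 2%:R) *: toCmx Omega2).

Definition pure_gaussian_cov (S : 'M[R]_(2 + 2)) : Prop :=
  S^T = S /\ bona_fide S /\ \det S = 16%:R^-1.
End Defs.

(* Test vectors supported on one mode
   give a, b >= 1/2, and the Schur complement of a S(r) in Sigma gives
   |c+ c-| <= a b; with det Sigma = 1/16 and AM-GM this yields
   a b - |c+ c-| >= 1/4.  If a or b exceeds 1/2, the corresponding local block
   of Sigma + i Omega / 2 is invertible and its Schur complement shows Simon's
   condition det (Sigma + i Omega / 2) >= 0, i.e.
   Delta = a^2 + b^2 + 2 c+ c- <= 1/2; otherwise a = b = 1/2.  Finally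
   (a - b)^2 = Delta - 2 (a b + c+ c-) <= 1/2 - 2 (a b - |c+ c-|) <= 0. *)

From HB Require Import structures.
From mathcomp Require Import all_boot all_order all_algebra.
From mathcomp Require Import reals trigo complex.
From mathcomp Require Import ring lra.

Set Implicit Arguments.
Unset Strict Implicit.
Unset Printing Implicit Defensive.

Import Order.TTheory GRing.Theory Num.Theory.
Local Open Scope ring_scope.

Section HermitianForm2.
Variable R : realFieldType.

(* The Hermitian form of [[al, p + i q], [p - i q, ga]] at (x1 + i y1, x2 + i y2). *)
Definition herm2_form (al ga p q x1 y1 x2 y2 : R) : R :=
  al * (x1 ^+ 2 + y1 ^+ 2) + ga * (x2 ^+ 2 + y2 ^+ 2)
  + 2 * (p * (x1 * x2 + y1 * y2) - q * (x1 * y2 - y1 * x2)).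

Lemma herm2_psd_det_ge0 (al ga p q : R) :
  (forall x1 y1 x2 y2, 0 <= herm2_form al ga p q x1 y1 x2 y2) ->
  p ^+ 2 + q ^+ 2 <= al * ga.
Proof.
rewrite /herm2_form => psd; set N := p ^+ 2 + q ^+ 2.
have N_ge0 : 0 <= N by rewrite addr_ge0 ?sqr_ge0.
have al_ge0 : 0 <= al by have := psd 1 0 0 0; lra.
have ga_ge0 : 0 <= ga by have := psd 0 0 1 0; lra.
have [al0 | al_neq0] := eqVneq al 0.
  have [N0 | N_neq0] := eqVneq N 0; first by rewrite N0 mulr_ge0.
  have N_gt0 : 0 < N by rewrite lt_def N_neq0.
  pose t := (ga + 1) / (2 * N).
  have tN : t * (2 * N) = ga + 1 by rewrite /t mulfVK // mulf_neq0 ?pnatr_eq0.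
  have := psd (- (t * p)) (- (t * q)) 1 0; rewrite al0 /N in tN *; nra.
have al_gt0 : 0 < al by rewrite lt_def al_neq0.
have := psd (- p) (- q) al 0 => h.
have : 0 <= al * (al * ga - N) by rewrite /N; nra.
by rewrite pmulr_rge0 // subr_ge0.
Qed.

End HermitianForm2.

Section PureTwoMode.
Variable R : realFieldType.
Variables a b r c s u v : R.
Hypotheses (r_gt0 : 0 < r) (cs_norm : c ^+ 2 + s ^+ 2 = 1).

Let r_neq0 : r != 0. Proof. exact: lt0r_neq0. Qed.

(* Re (z^* (Sigma + i Omega / 2) z) at z = x + i y, for Sigma = Sigma_of a b r phi u v
   with c = cos phi and s = sin phi. *)
Definition cov_form (x0 x1 x2 x3 y0 y1 y2 y3 : R) : R :=
  a * r * (x0 ^+ 2 + y0 ^+ 2) + a / r * (x1 ^+ 2 + y1 ^+ 2)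
  + b * (x2 ^+ 2 + y2 ^+ 2 + x3 ^+ 2 + y3 ^+ 2)
  + 2 * (c * u * (x0 * x2 + y0 * y2) - s * v * (x0 * x3 + y0 * y3)
         + s * u * (x1 * x2 + y1 * y2) + c * v * (x1 * x3 + y1 * y3))
  - (x0 * y1 - x1 * y0) - (x2 * y3 - x3 * y2).

(* det Sigma = det (b A - K K^T), with A = a S(r) and K = R(phi) C. *)
Definition cov_det : R :=
  (b * (a * r) - (c ^+ 2 * u ^+ 2 + s ^+ 2 * v ^+ 2))
  * (b * (a / r) - (s ^+ 2 * u ^+ 2 + c ^+ 2 * v ^+ 2))
  - (c * s * (u ^+ 2 - v ^+ 2)) ^+ 2.

(* det (Sigma + i Omega / 2) = det Sigma - (det A + det B + 2 det (R C)) / 4 + 1 / 16. *)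
Definition cov_udet : R :=
  cov_det - (a ^+ 2 + b ^+ 2 + 2 * ((c ^+ 2 + s ^+ 2) * (u * v))) / 4 + 16^-1.

(* The diagonal of R(phi)^T S(r)^-1 R(phi). *)
Definition invS_rot11 : R := c ^+ 2 / r + s ^+ 2 * r.
Definition invS_rot22 : R := s ^+ 2 / r + c ^+ 2 * r.

Lemma invS_rot_ge0 : 0 <= invS_rot11 /\ 0 <= invS_rot22.
Proof.
have r_inv_gt0 : 0 < r^-1 by rewrite invr_gt0.
by rewrite /invS_rot11 /invS_rot22; split; apply: addr_ge0; apply: mulr_ge0;
  rewrite ?sqr_ge0 ?ltW.
Qed.

Lemma invS_rot_mul_ge1 : 1 <= invS_rot11 * invS_rot22.
Proof.
have -> : invS_rot11 * invS_rot22 = (c ^+ 2 + s ^+ 2) ^+ 2 + (c * s * (r - r^-1)) ^+ 2.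
  by rewrite /invS_rot11 /invS_rot22; field.
by rewrite cs_norm expr1n lerDl sqr_ge0.
Qed.

Lemma two_abs_cpl_le : 2 * `|u * v| <= u ^+ 2 * invS_rot11 + v ^+ 2 * invS_rot22.
Proof.
have [rot11_ge0 rot22_ge0] := invS_rot_ge0.
have T_ge0 : 0 <= u ^+ 2 * invS_rot11 + v ^+ 2 * invS_rot22.
  by rewrite addr_ge0 // mulr_ge0 ?sqr_ge0.
rewrite -(ler_pXn2r (_ : 0 < 2)%N) ?nnegrE ?mulr_ge0 //.
have -> : (u ^+ 2 * invS_rot11 + v ^+ 2 * invS_rot22) ^+ 2 =
  (u ^+ 2 * invS_rot11 - v ^+ 2 * invS_rot22) ^+ 2
  + 4 * (u * v) ^+ 2 * (invS_rot11 * invS_rot22) by ring.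
rewrite exprMn real_normK ?num_real //.
have := invS_rot_mul_ge1; have := sqr_ge0 (u * v);
  have := sqr_ge0 (u ^+ 2 * invS_rot11 - v ^+ 2 * invS_rot22); nra.
Qed.

Hypothesis cov_form_ge0 :
  forall x0 x1 x2 x3 y0 y1 y2 y3, 0 <= cov_form x0 x1 x2 x3 y0 y1 y2 y3.

Lemma a_ge_half : 2^-1 <= a.
Proof.
have := cov_form_ge0 1 0 0 0 0 r 0 0.
have -> : cov_form 1 0 0 0 0 r 0 0 = r * (2 * a - 1) by rewrite /cov_form; field.
by rewrite pmulr_rge0 //; lra.
Qed.

Lemma b_ge_half : 2^-1 <= b.
Proof.
have := cov_form_ge0 0 0 1 0 0 0 0 1.
have -> : cov_form 0 0 1 0 0 0 0 1 = 2 * b - 1 by rewrite /cov_form; ring.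
lra.
Qed.

Let a_gt0 : 0 < a. Proof. by have := a_ge_half; lra. Qed.

Lemma cpl11_le_ab : u ^+ 2 * invS_rot11 <= a * b.
Proof.
have := cov_form_ge0 (- (c * u / r)) (- (s * u * r)) a 0 0 0 0 0.
have -> : cov_form (- (c * u / r)) (- (s * u * r)) a 0 0 0 0 0
          = a * (a * b - u ^+ 2 * invS_rot11).
  by rewrite /cov_form /invS_rot11; field.
by rewrite pmulr_rge0 // subr_ge0.
Qed.

Lemma cpl22_le_ab : v ^+ 2 * invS_rot22 <= a * b.
Proof.
have := cov_form_ge0 (s * v / r) (- (c * v * r)) 0 a 0 0 0 0.
have -> : cov_form (s * v / r) (- (c * v * r)) 0 a 0 0 0 0
          = a * (a * b - v ^+ 2 * invS_rot22).
  by rewrite /cov_form /invS_rot22; field.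
by rewrite pmulr_rge0 // subr_ge0.
Qed.

Lemma abs_cpl_le_ab : `|u * v| <= a * b.
Proof.
have [rot11_ge0 rot22_ge0] := invS_rot_ge0.
have ab_ge0 : 0 <= a * b by rewrite mulr_ge0 ?ltW //; have := b_ge_half; lra.
rewrite -(ler_pXn2r (_ : 0 < 2)%N) ?nnegrE // real_normK ?num_real //.
apply: le_trans (_ : (u ^+ 2 * invS_rot11) * (v ^+ 2 * invS_rot22) <= _).
  rewrite mulrACA exprMn -[X in X <= _]mulr1.
  by rewrite ler_wpM2l ?invS_rot_mul_ge1 // mulr_ge0 // sqr_ge0.
rewrite expr2 ler_pM ?cpl11_le_ab ?cpl22_le_ab //; apply: mulr_ge0 => //; exact: sqr_ge0.
Qed.

Lemma cov_det_le : cov_det <= (a * b - `|u * v|) ^+ 2.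
Proof.
have ab_ge0 : 0 <= a * b by rewrite mulr_ge0 ?ltW //; have := b_ge_half; lra.
have -> : cov_det = (a * b) ^+ 2
    - a * b * (u ^+ 2 * invS_rot11 + v ^+ 2 * invS_rot22)
    + (u * v) ^+ 2 * (c ^+ 2 + s ^+ 2) ^+ 2.
  by rewrite /cov_det /invS_rot11 /invS_rot22; field.
rewrite cs_norm expr1n mulr1 -(real_normK (num_real (u * v))).
have := ler_wpM2l ab_ge0 two_abs_cpl_le; nra.
Qed.

Definition detMA : R := a ^+ 2 - 4^-1.
Definition detMB : R := b ^+ 2 - 4^-1.

(* With M = b I + i J / 2, the mode-I block of Sigma + i Omega / 2, and
   K = R(phi) C, the test vector (det M) x (+) (- adj M K^T x) turns the form
   into det M times the form of the 2 x 2 Hermitian matrix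
   det M * (a S(r) + i J / 2 - K M^-1 K^T), with entries schurB11, schurB22 and
   schurB_re + i schurB_im; its determinant is det M * det (Sigma + i Omega / 2).
   Symmetrically for the mode-S block a S(r) + i J / 2. *)
Definition schurB11 : R := detMB * (a * r) - b * (c ^+ 2 * u ^+ 2 + s ^+ 2 * v ^+ 2).
Definition schurB22 : R := detMB * (a / r) - b * (s ^+ 2 * u ^+ 2 + c ^+ 2 * v ^+ 2).
Definition schurB_re : R := - (b * (c * s * (u ^+ 2 - v ^+ 2))).
Definition schurB_im : R := (detMB + (c ^+ 2 + s ^+ 2) * (u * v)) / 2.

Definition schurA11 : R := detMA * b - a * (u ^+ 2 * invS_rot11).
Definition schurA22 : R := detMA * b - a * (v ^+ 2 * invS_rot22).
Definition schurA_re : R := - (a * (c * s * (u * v) * (r - r^-1))).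
Definition schurA_im : R := (detMA + (c ^+ 2 + s ^+ 2) * (u * v)) / 2.

Lemma cov_form_schurB x1 y1 x2 y2 :
  let m1 := c * u * x1 + s * u * x2 in let n1 := c * u * y1 + s * u * y2 in
  let m2 := c * v * x2 - s * v * x1 in let n2 := c * v * y2 - s * v * y1 in
  cov_form (detMB * x1) (detMB * x2) (- (b * m1) - n2 / 2) (n1 / 2 - b * m2)
           (detMB * y1) (detMB * y2) (- (b * n1) + m2 / 2) (- (m1 / 2) - b * n2)
  = detMB * herm2_form schurB11 schurB22 schurB_re schurB_im x1 y1 x2 y2.
Proof.
by rewrite /cov_form /herm2_form /schurB11 /schurB22 /schurB_re /schurB_im /detMB /=; field.
Qed.

Lemma schurB_det :
  schurB11 * schurB22 - (schurB_re ^+ 2 + schurB_im ^+ 2) = detMB * cov_udet.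
Proof.
by rewrite /schurB11 /schurB22 /schurB_re /schurB_im /cov_udet /cov_det /detMB; field.
Qed.

Lemma cov_form_schurA x1 y1 x2 y2 :
  let m1 := c * u * x1 - s * v * x2 in let n1 := c * u * y1 - s * v * y2 in
  let m2 := s * u * x1 + c * v * x2 in let n2 := s * u * y1 + c * v * y2 in
  cov_form (- (a / r * m1) - n2 / 2) (n1 / 2 - a * r * m2) (detMA * x1) (detMA * x2)
           (- (a / r * n1) + m2 / 2) (- (m1 / 2) - a * r * n2) (detMA * y1) (detMA * y2)
  = detMA * herm2_form schurA11 schurA22 schurA_re schurA_im x1 y1 x2 y2.
Proof.
rewrite /cov_form /herm2_form /schurA11 /schurA22 /schurA_re /schurA_im.
by rewrite /detMA /invS_rot11 /invS_rot22 /=; field.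
Qed.

Lemma schurA_det :
  schurA11 * schurA22 - (schurA_re ^+ 2 + schurA_im ^+ 2) = detMA * cov_udet.
Proof.
rewrite /schurA11 /schurA22 /schurA_re /schurA_im /cov_udet /cov_det.
by rewrite /detMA /invS_rot11 /invS_rot22; field.
Qed.

Lemma cov_udet_ge0_of_b : 2^-1 < b -> 0 <= cov_udet.
Proof.
move=> b_gt; have detMB_gt0 : 0 < detMB by rewrite /detMB; nra.
rewrite -(pmulr_rge0 _ detMB_gt0) -schurB_det subr_ge0.
apply: herm2_psd_det_ge0 => x1 y1 x2 y2.
rewrite -(pmulr_rge0 _ detMB_gt0) -cov_form_schurB; exact: cov_form_ge0.
Qed.

Lemma cov_udet_ge0_of_a : 2^-1 < a -> 0 <= cov_udet.
Proof.
move=> a_gt; have detMA_gt0 : 0 < detMA by rewrite /detMA; nra.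
rewrite -(pmulr_rge0 _ detMA_gt0) -schurA_det subr_ge0.
apply: herm2_psd_det_ge0 => x1 y1 x2 y2.
rewrite -(pmulr_rge0 _ detMA_gt0) -cov_form_schurA; exact: cov_form_ge0.
Qed.

Hypothesis cov_det_eq : cov_det = 16^-1.

Lemma ab_sub_abs_cpl_ge_quarter : 4^-1 <= a * b - `|u * v|.
Proof.
have := cov_det_le; rewrite cov_det_eq.
have := abs_cpl_le_ab; nra.
Qed.

Lemma cov_purity_a_eq_b : a = b.
Proof.
have udet_ge0 : a = b \/ 0 <= cov_udet.
  have [a_gt | a_le] := ltP 2^-1 a; first by right; exact: cov_udet_ge0_of_a.
  have [b_gt | b_le] := ltP 2^-1 b; first by right; exact: cov_udet_ge0_of_b.
  by left; have := a_ge_half; have := b_ge_half; lra.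
case: udet_ge0 => //; rewrite /cov_udet cov_det_eq cs_norm mul1r => udet_ge0.
have := ler_norm (- (u * v)); rewrite normrN => uv_ge.
have := ab_sub_abs_cpl_ge_quarter => ab_ge.
have : (a - b) ^+ 2 <= 0 by rewrite sqrrB; lra.
by move=> ab_le; apply/eqP; rewrite -subr_eq0 -sqrf_eq0 eq_le ab_le sqr_ge0.
Qed.

End PureTwoMode.

Section ComplexToReal.
Variable R : realType.
Local Open Scope complex_scope.

Definition herm_real_form n (S W : 'M[R]_n) (x y : 'I_n -> R) : R :=
  \sum_i \sum_j (S i j * (x i * x j + y i * y j) - W i j / 2 * (x i * y j - y i * x j)).

Lemma Re_herm_entry (xi yi xj yj s w : R) :
  complex.Re ((xi +i* yi)^* * (s%:C + 'i / 2 * w%:C) * (xj +i* yj)) =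
  s * (xi * xj + yi * yj) - w / 2 * (xi * yj - yi * xj).
Proof.
have -> : ('i / 2 : R[i]) = 0 +i* 2^-1.
  apply: (canLR (mulfK _)); first by rewrite pnatr_eq0.
  by rewrite -[2 : R[i]](rmorph_nat (real_complex R)) /=; simpc; rewrite mulVf ?pnatr_eq0.
by simpc; rewrite /=; ring.
Qed.

Lemma psd_C_real_form n (S W : 'M[R]_n) :
  psd_C (toCmx S + ('i / 2%:R) *: toCmx W) -> forall x y, 0 <= herm_real_form S W x y.
Proof.
move=> psd x y; have := psd (\col_i (x i +i* y i)).
rewrite lecE => /andP[_]; congr (_ <= _).
rewrite /herm_real_form exchange_big !mxE (raddf_sum (@complex.Re R : Rcomplex R -> R)).
apply: eq_bigr => j _; rewrite !mxE mulr_suml (raddf_sum (@complex.Re R : Rcomplex R -> R)).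
by apply: eq_bigr => i _; rewrite !mxE -Re_herm_entry.
Qed.

End ComplexToReal.

Section SigmaEntries.
Variable R : realType.

Lemma block_mx_natE m n (A : 'M[R]_m) (B : 'M_(m, n)) (C : 'M_(n, m)) (D : 'M_n)
    (f : nat -> nat -> R) :
  (forall i j, A i j = f i j) -> (forall i j, B i j = f i (m + j)%N) ->
  (forall i j, C i j = f (m + i)%N j) -> (forall i j, D i j = f (m + i)%N (m + j)%N) ->
  block_mx A B C D = \matrix_(i, j) f i j.
Proof.
move=> eA eB eC eD; apply/matrixP => i j; rewrite mxE -(splitK i) -(splitK j).
case: (split i) => i'; case: (split j) => j';
  by rewrite /= ?(block_mxEul, block_mxEur, block_mxEdl, block_mxEdr).
Qed.

Definition sigma_nat (a b r c s u v : R) (i j : nat) : R :=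
  match i, j with
  | 0, 0 => a * r | 0, 2 => c * u | 0, 3 => - (s * v)
  | 1, 1 => a / r | 1, 2 => s * u | 1, 3 => c * v
  | 2, 0 => c * u | 2, 1 => s * u | 2, 2 => b
  | 3, 0 => - (s * v) | 3, 1 => c * v | 3, 3 => b
  | _, _ => 0 end.

Definition omega_nat (i j : nat) : R :=
  match i, j with
  | 0, 1 | 2, 3 => 1
  | 1, 0 | 3, 2 => -1
  | _, _ => 0 end.

Lemma Sigma_of_natE a b r phi cp cm :
  Sigma_of a b r phi cp cm
  = \matrix_(i < 4, j < 4) sigma_nat a b r (cos phi) (sin phi) cp cm i j.
Proof.
apply: block_mx_natE;
  by case=> [[|[|?]] ?] [[|[|?]] ?] //; rewrite !mxE ?big_ord_recr ?big_ord0 /= ?mxE /=; ring.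
Qed.

Lemma Omega2_natE : Omega2 R = \matrix_(i < 4, j < 4) omega_nat i j.
Proof.
by apply: block_mx_natE; case=> [[|[|?]] ?] [[|[|?]] ?] //; rewrite !mxE.
Qed.

Lemma det_Sigma_of a b r phi cp cm :
  \det (Sigma_of a b r phi cp cm) = @cov_det R a b r (cos phi) (sin phi) cp cm.
Proof.
have -> : \det (Sigma_of a b r phi cp cm)
          = \det (\matrix_(i < 4, j < 4) sigma_nat a b r (cos phi) (sin phi) cp cm i j).
  by rewrite Sigma_of_natE.
do ![rewrite (expand_det_row _ ord0) !big_ord_recr big_ord0 /cofactor].
by rewrite !det_mx00 !mxE /cov_det /=; ring.
Qed.

Lemma herm_real_form_Sigma_of a b r phi cp cm x0 x1 x2 x3 y0 y1 y2 y3 :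
  herm_real_form (Sigma_of a b r phi cp cm) (Omega2 R)
    (fun i => [:: x0; x1; x2; x3]`_i) (fun i => [:: y0; y1; y2; y3]`_i)
  = @cov_form R a b r (cos phi) (sin phi) cp cm x0 x1 x2 x3 y0 y1 y2 y3.
Proof.
rewrite Sigma_of_natE Omega2_natE /herm_real_form.
rewrite !big_ord_recr !big_ord0 /= !mxE /cov_form /=.
(* Abstracting a / r spares field the side condition r != 0. *)
by move: (a / r) => ar; field.
Qed.

End SigmaEntries.

Theorem lemma8 (R : realType) (a b r phi cp cm : R) :
  0 < r -> pure_gaussian_cov (Sigma_of a b r phi cp cm) -> a = b.
Proof.
move=> r_gt0 [_ [bona_fide_Sigma det_Sigma]].
apply: (cov_purity_a_eq_b r_gt0 (cos2Dsin2 phi)).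
- move=> x0 x1 x2 x3 y0 y1 y2 y3; rewrite -herm_real_form_Sigma_of.
  exact: psd_C_real_form bona_fide_Sigma _ _.
- by rewrite -det_Sigma_of det_Sigma.
Qed.
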